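(* If $q$ is a prime power, $n\in\mathbb Z^+$ and $M\cong\mathrm{PG}(n-1,q)$, then $\mathcal T_n(M)$ is a tangle of order $n$ in $M$.
   Context: For a matroid $M$ and $X\subseteq E(M)$, $\lambda_M(X)=r_M(X)+r_M(E(M)-X)-r(M)$; $X$ is $k$-separating if $\lambda_M(X)<k$. For an integer $k$, $\mathcal T_k(M)$ is the collection of $(k-1)$-separating subsets of $E(M)$ that are neither spanning nor cospanning. For $\theta\in\mathbb Z^+$, a collection $\mathcal T$ of subsets of $E(M)$ is a tangle of order $\theta$ if: (i) every set in $\mathcal T$ is $(\theta-1)$-separating, and for each $(\theta-1)$-separating set $X$, either $X\in\mathcal T$ or $E(M)-X\in\mathcal T$; (ii) no three sets in $\mathcal T$ have union $E(M)$; (iii) $E(M)-\{e\}\notin\mathcal T$ for each $e\in E(M)$. *)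

From mathcomp Require Import all_boot all_algebra.
Set Implicit Arguments. Unset Strict Implicit. Unset Printing Implicit Defensive.
Import GRing.Theory.

Record matroid (E : finType) := Matroid {
  rk : {set E} -> nat;
  rk_card : forall X, rk X <= #|X|;
  rk_mono : forall X Y : {set E}, X \subset Y -> rk X <= rk Y;
  rk_submod : forall X Y : {set E}, rk (X :|: Y) + rk (X :&: Y) <= rk X + rk Y
}.

Section MatroidDefs.
Variables (E : finType) (M : matroid E).

Definition mrank : nat := rk M setT.

(* lambda_M(X) = r(X) + r(E - X) - r(M)  (always >= 0 by submodularity) *)
Definition conn (X : {set E}) : nat := rk M X + rk M (~: X) - mrank.

Definition separating (k : nat) (X : {set E}) : bool := conn X < k.

Definition spanning (X : {set E}) : bool := rk M X == mrank.

Definition dual_rk (X : {set E}) : nat := #|X| + rk M (~: X) - mrank.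

Definition cospanning (X : {set E}) : bool := dual_rk X == dual_rk setT.

Definition Tcal (k : nat) : {set {set E}} :=
  [set X | separating k.-1 X && ~~ spanning X && ~~ cospanning X].

Definition is_tangle (theta : nat) (T : {set {set E}}) : Prop :=
  [/\ 0 < theta,
      (forall X : {set E}, X \in T -> separating theta.-1 X),
      (forall X : {set E}, separating theta.-1 X -> X \in T \/ ~: X \in T),
      (forall X Y Z : {set E}, X \in T -> Y \in T -> Z \in T -> X :|: Y :|: Z != setT)
    & (forall e : E, ~: [set e] \notin T)].

(* M is isomorphic to PG(n-1, F): there is a bijection e |-> <f e> from E
   onto the set of 1-dimensional subspaces of F^n (points of PG(n-1,F))
   such that r_M(X) is the dimension of the span of the points of X. *)
Definition iso_PG (F : finFieldType) (n : nat) : Prop :=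
  exists f : E -> 'rV[F]_n,
    [/\ (forall e, f e != 0)%R,
        (forall e e', (f e == f e')%MS -> e = e'),
        (forall v : 'rV[F]_n, (v != 0)%R -> exists e, (v == f e)%MS)
      & (forall X : {set E}, rk M X = \rank (\sum_(e in X) <<f e>>)%MS)].

End MatroidDefs.

From mathcomp Require Import all_boot all_algebra.
From mathcomp Require Import zify.
Set Implicit Arguments. Unset Strict Implicit. Unset Printing Implicit Defensive.
Import GRing.Theory.

(* In PG(n-1, q) every non-spanning set X lies in a hyperplane, and the points
   off that hyperplane already span, so E - X is spanning.  Hence
   lambda(X) = min(r(X), r(E - X)), T_n(M) is exactly the family of sets of
   rank at most n - 2, and axiom (i) follows.  Axioms (ii) and (iii) reduce to
   the fact that F^n is not the union of a subspace of codimension at least two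
   and two hyperplanes. *)

Section ProperSubspaces.
Variables (F : fieldType) (n : nat).
Implicit Types (u v : 'rV[F]_n) (U : 'M[F]_n).

Lemma submxDl u v U : (u <= U)%MS -> ((u + v)%R <= U)%MS = (v <= U)%MS.
Proof.
move=> uU; apply/idP/idP => [uvU|]; last exact: addmx_sub uU.
by rewrite -[v](addKr u); apply: addmx_sub; rewrite ?eqmx_opp.
Qed.

Lemma submxDr u v U : (v <= U)%MS -> ((u + v)%R <= U)%MS = (u <= U)%MS.
Proof. by rewrite addrC; apply: submxDl. Qed.

Lemma mxrank_sub_all U : (forall v, (v <= U)%MS) -> \rank U = n.
Proof. by move=> allU; apply/eqP; rewrite -[_ == _]sub1mx; apply/row_subP. Qed.

Lemma exists_nsubmx U : \rank U < n -> exists v, ~~ (v <= U)%MS.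
Proof.
move=> rkU; have /row_subPn[i]: ~~ ((1%:M)%R <= U)%MS.
  by rewrite sub1mx; apply: contraL rkU => /eqP ->; rewrite ltnn.
by exists (row i 1%:M)%R.
Qed.

Lemma exists_nsubmx2 U1 U2 : \rank U1 < n -> \rank U2 < n ->
  exists v, ~~ (v <= U1)%MS && ~~ (v <= U2)%MS.
Proof.
move=> /exists_nsubmx[u u1] /exists_nsubmx[v v2].
have [u2|u2] := boolP (u <= U2)%MS; last by exists u; rewrite u1.
have [v1|v1] := boolP (v <= U1)%MS; last by exists v; rewrite v1 v2.
by exists (u + v)%R; rewrite (submxDr u v1) (submxDl v u2) u1.
Qed.

(* Over GF(2) the bound on U1 cannot be relaxed to \rank U1 < n: the plane
   GF(2)^2 is the union of its three lines. *)
Lemma exists_nsubmx3 U1 U2 U3 :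
  \rank U1 < n.-1 -> \rank U2 < n -> \rank U3 < n ->
  exists v, [&& ~~ (v <= U1)%MS, ~~ (v <= U2)%MS & ~~ (v <= U3)%MS].
Proof.
move=> rkU1 rkU2 rkU3.
have [u /andP[u1 u2]] : exists u, ~~ (u <= U1)%MS && ~~ (u <= U2)%MS.
  by apply: exists_nsubmx2 => //; lia.
have [u3|u3] := boolP (u <= U3)%MS; last by exists u; rewrite u1 u2 u3.
have uU1u : (u <= U1 + <<u>>)%MS.
  by apply: submx_trans (addsmxSr _ _); rewrite genmxE.
have rkU1u : \rank (U1 + <<u>>)%MS < n.
  have [+ _] := mxrank_adds_leqif U1 <<u>>%MS.
  rewrite genmxE; have := rank_leq_row u; lia.
have [v /andP[vU1u v3]] := exists_nsubmx2 rkU1u rkU3.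
have v1 : ~~ (v <= U1)%MS.
  by apply: contra vU1u => /submx_trans; apply; exact: addsmxSl.
have [v2|v2] := boolP (v <= U2)%MS; last by exists v; rewrite v1 v2 v3.
exists (u + v)%R; rewrite (submxDr u v2) (submxDl v u3) u2 v3 !andbT.
apply: contra vU1u => uvU1; rewrite -(submxDl v uU1u).
exact: submx_trans uvU1 (addsmxSl _ _).
Qed.

End ProperSubspaces.

Section MatroidRank.
Variables (E : finType) (M : matroid E).

Lemma rk_set0 : rk M set0 = 0.
Proof. by apply/eqP; rewrite -leqn0 -(cards0 E) rk_card. Qed.

Lemma rk_set1 x : rk M [set x] <= 1.
Proof. by rewrite -(cards1 x) rk_card. Qed.

Lemma rk_setU1 x X : rk M (x |: X) <= (rk M X).+1.
Proof. have := rk_submod M [set x] X; have := rk_set1 x; lia. Qed.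

End MatroidRank.

Section ProjectiveGeometry.
Variables (F : fieldType) (n : nat) (E : finType) (M : matroid E).
Variable f : E -> 'rV[F]_n.
Hypothesis f_onto : forall v : 'rV[F]_n, (v != 0)%R -> exists e, (v == f e)%MS.
Hypothesis rk_span : forall X, rk M X = \rank (\sum_(e in X) <<f e>>)%MS.

Local Notation span X := (\sum_(e in X) <<f e>>)%MS.

Lemma point_of_vector (v : 'rV[F]_n) : (v != 0)%R ->
  exists e, forall X : {set E}, e \in X -> (v <= span X)%MS.
Proof.
move=> /f_onto[e /eqmxP ve]; exists e => X eX.
by rewrite ve; apply: (sumsmx_sup e) => //; rewrite genmxE.
Qed.

Lemma mrank_PG : mrank M = n.
Proof.
rewrite /mrank rk_span; apply: mxrank_sub_all => v.
have [->|/point_of_vector[e sub_v]] := eqVneq v 0%R; first exact: sub0mx.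
exact/sub_v/in_setT.
Qed.

Lemma rk_leq_PG X : rk M X <= n.
Proof. by rewrite -mrank_PG rk_mono ?subsetT. Qed.

Lemma rk_setC_PG X : rk M X < n -> rk M (~: X) = n.
Proof.
rewrite !rk_span => /exists_nsubmx[w wX].
have subC (v : 'rV[F]_n) : ~~ (v <= span X)%MS -> (v <= span (~: X))%MS.
  move=> vX; have /point_of_vector[e sub_v] : (v != 0)%R.
    by apply: contraNneq vX => ->; apply: sub0mx.
  by apply: (sub_v); rewrite inE; apply: contra vX; apply: sub_v.
apply: mxrank_sub_all => v.
have [vX|] := boolP (v <= span X)%MS; last exact: subC.
by rewrite -(submxDr v (subC w wX)) subC // submxDl.
Qed.

Lemma conn_PG X : conn M X = minn (rk M X) (rk M (~: X)).
Proof.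
rewrite /conn mrank_PG; have [rkX|] := ltnP (rk M X) n.
  by rewrite rk_setC_PG // addnK; apply/esym/minn_idPl/ltnW.
move=> le_n_rkX; have -> : rk M X = n by apply/eqP; rewrite eqn_leq rk_leq_PG.
by rewrite addKn; apply/esym/minn_idPr/rk_leq_PG.
Qed.

Lemma card_setC_PG X : rk M X < n.-1 -> n < #|~: X|.
Proof.
move=> rkX; have [c cX] : exists c, c \notin X.
  apply/existsP; apply: contraLR rkX => /existsPn allX.
  have -> : X = setT by apply/setP => c; have := allX c; rewrite negbK inE.
  by rewrite -/(mrank M) mrank_PG -leqNgt leq_pred.
have rkcX : rk M (c |: X) < n by have := rk_setU1 M c X; lia.
have := rk_card M (~: (c |: X)); rewrite rk_setC_PG //.
have := cardsC (c |: X); rewrite cardsU1 cX; have := cardsC X; lia.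
Qed.

Lemma Tcal_PG X : (X \in Tcal M n) = (rk M X < n.-1).
Proof.
rewrite inE /separating /spanning /cospanning /dual_rk conn_PG mrank_PG.
rewrite setCT rk_set0 cardsT; apply/idP/idP => [/andP[/andP[sepX rkX] _]|rkX].
  have {}rkX : rk M X < n by rewrite ltn_neqAle rkX rk_leq_PG.
  by move: sepX; rewrite rk_setC_PG //; have := rk_leq_PG X; lia.
have rkXn : rk M X < n by lia.
rewrite rk_setC_PG // (minn_idPl (ltnW rkXn)) rkX neq_ltn rkXn /=.
apply/eqP; rewrite -(cardsC X); have := card_setC_PG rkX; lia.
Qed.

Lemma setU3_neqT_PG X Y Z :
  rk M X < n.-1 -> rk M Y < n -> rk M Z < n -> X :|: Y :|: Z != setT.
Proof.
rewrite !rk_span => /exists_nsubmx3 /[apply] /[apply] -[v /and3P[vX vY vZ]].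
have /point_of_vector[e sub_v] : (v != 0)%R.
  by apply: contraNneq vX => ->; apply: sub0mx.
apply/eqP => XYZ; have : e \in X :|: Y :|: Z by rewrite XYZ inE.
by rewrite !inE => /orP[/orP[]|] /sub_v; apply/negP.
Qed.

Lemma Tcal_tangle_PG : 0 < n -> is_tangle M n (Tcal M n).
Proof.
move=> n_gt0; split => // [X | X | X Y Z | e].
- by rewrite inE => /andP[/andP[]].
- rewrite /separating conn_PG gtn_min !Tcal_PG => /orP[]; by [left | right].
- rewrite !Tcal_PG => rkX rkY rkZ; apply: setU3_neqT_PG => //; lia.
- rewrite Tcal_PG; apply/negP => rkC.
  have rke : rk M [set e] < n by have := rk_set1 M e; lia.
  have := setU3_neqT_PG rkC rke rke.
  by rewrite -setUA setUid setUC setUCr eqxx.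
Qed.

End ProjectiveGeometry.

Theorem lemma6p3 (F : finFieldType) (n : nat) (E : finType) (M : matroid E) :
  0 < n -> iso_PG M F n -> is_tangle M n (Tcal M n).
Proof.
move=> n_gt0 [f [_ _ f_onto rk_span]].
exact: Tcal_tangle_PG f_onto rk_span n_gt0.
Qed.
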